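(* Let $(G,g)$ be a five-dimensional semi-Riemannian Lie group with a subgroup $K\cong\mathrm{SU}(2)$ generating a left-invariant conformal foliation $\mathcal F$ on $G$. Let $\mathfrak g=\mathfrak{su}(2)\oplus\mathfrak m$ be the orthogonal decomposition of the Lie algebra of $G$ and let $\{A,B,C,X,Y\}$ be an orthonormal basis for $\mathfrak g$ such that $A,B,C$ generate $\mathfrak{su}(2)$ with $[A,B]=2C$, $[C,A]=2B$, $[B,C]=2A$. In this setting the brackets have the form $[A,X]=-b_{11}B-c_{11}C$, $[A,Y]=-b_{21}B-c_{21}C$, $[B,X]=b_{11}A-c_{12}C$, $[B,Y]=b_{21}A-c_{22}C$, $[C,X]=c_{11}A+c_{12}B$, $[C,Y]=c_{21}A+c_{22}B$ for real numbers $b_{11},b_{21},c_{11},c_{12},c_{21},c_{22}$. Then the foliation $\mathcal F$ is semi-Riemannian and minimal. It is totally geodesic if and only if $$0=(\varepsilon_B-\varepsilon_A)b_{11}=(\varepsilon_B-\varepsilon_A)b_{21}=(\varepsilon_C-\varepsilon_A)c_{11}=(\varepsilon_C-\varepsilon_A)c_{21}=(\varepsilon_C-\varepsilon_B)c_{12}=(\varepsilon_C-\varepsilon_B)c_{22}.$$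
   Context: A semi-Riemannian Lie group $(G,g)$ is a Lie group with a left-invariant non-degenerate metric $g$ of arbitrary signature; its Lie algebra is identified with the left-invariant vector fields. The subgroup $K$ generates the left-invariant foliation $\mathcal F$ by left translates of $K$, with tangent distribution $\mathcal V$ spanned by $\mathfrak{su}(2)$ and orthogonal complement $\mathcal H$ spanned by $\mathfrak m$; $\mathcal V,\mathcal H$ also denote orthogonal projections. Orthonormal means $g(E_i,E_j)=\varepsilon_{E_i}\delta_{ij}$, $\varepsilon_{E_i}=g(E_i,E_i)\in\{\pm1\}$. With $\nabla$ the Levi-Civita connection: $B^{\mathcal H}(E,F)=\tfrac12\mathcal V(\nabla_EF+\nabla_FE)$ ($E,F\in\mathcal H$), $B^{\mathcal V}(E,F)=\tfrac12\mathcal H(\nabla_EF+\nabla_FE)$ ($E,F\in\mathcal V$). $\mathcal F$ is conformal if $B^{\mathcal H}=g\otimes V$ for some vector field $V$ in $\mathcal V$, semi-Riemannian if $B^{\mathcal H}=0$, minimal if $\sum_k\varepsilon_{V_k}B^{\mathcal V}(V_k,V_k)=0$ for an orthonormal basis $\{V_k\}$ of $\mathcal V$, and totally geodesic if $B^{\mathcal V}=0$. *)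

(* Everything is left-invariant, so the whole setting is
   encoded at the level of the Lie algebra g = Lie(G), identified with R^5
   via the orthonormal basis {A,B,C,X,Y} = {e 0, e 1, e 2, e 3, e 4}. *)
From HB Require Import structures.
From mathcomp Require Import all_boot all_order all_algebra.
Set Implicit Arguments. Unset Strict Implicit. Unset Printing Implicit Defensive.
Import Order.TTheory GRing.Theory Num.Theory.
Local Open Scope ring_scope.

Section Setting.
Variable R : realFieldType.

Definition vec := 'rV[R]_5.
Definition e (i : 'I_5) : vec := delta_mx 0 i.

Definition iA : 'I_5 := inord 0.
Definition iB : 'I_5 := inord 1.
Definition iC : 'I_5 := inord 2.
Definition iX : 'I_5 := inord 3.
Definition iY : 'I_5 := inord 4.

Definition gm (eps : 'I_5 -> R) (u v : vec) : R :=
  \sum_(i < 5) eps i * u 0 i * v 0 i.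

Definition bilin (c : 'I_5 -> 'I_5 -> vec) (u v : vec) : vec :=
  \sum_(i < 5) \sum_(j < 5) (u 0 i * v 0 j) *: c i j.

(* c i j = [e_i, e_j] *)
Definition is_lie_algebra (c : 'I_5 -> 'I_5 -> vec) : Prop :=
  (forall i j, c i j = - c j i) /\
  (forall i j k, bilin c (e i) (c j k) + bilin c (e j) (c k i)
                   + bilin c (e k) (c i j) = 0).

(* Levi-Civita connection on left-invariant fields: Gam i j = nabla_{e_i} e_j,
   torsion free and metric (g(e_i,e_j) is constant). *)
Definition is_levi_civita (eps : 'I_5 -> R) (c Gam : 'I_5 -> 'I_5 -> vec) : Prop :=
  (forall i j, Gam i j - Gam j i = c i j) /\
  (forall k i j, gm eps (Gam k i) (e j) + gm eps (e i) (Gam k j) = 0).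

Definition Vproj (u : vec) : vec := \row_(i < 5) (if (i < 3)%N then u 0 i else 0).
Definition Hproj (u : vec) : vec := \row_(i < 5) (if (i < 3)%N then 0 else u 0 i).
Definition vertical (u : vec) : Prop := Vproj u = u.
Definition horizontal (u : vec) : Prop := Hproj u = u.

Definition BH (Gam : 'I_5 -> 'I_5 -> vec) (u v : vec) : vec :=
  2^-1 *: Vproj (bilin Gam u v + bilin Gam v u).
Definition BV (Gam : 'I_5 -> 'I_5 -> vec) (u v : vec) : vec :=
  2^-1 *: Hproj (bilin Gam u v + bilin Gam v u).

Definition conformal_fol eps Gam : Prop :=
  exists W : vec, vertical W /\
    forall u v, horizontal u -> horizontal v -> BH Gam u v = gm eps u v *: W.
Definition semi_riemannian_fol (Gam : 'I_5 -> 'I_5 -> vec) : Prop :=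
  forall u v, horizontal u -> horizontal v -> BH Gam u v = 0.
(* {A,B,C} is an orthonormal basis of V *)
Definition minimal_fol (eps : 'I_5 -> R) Gam : Prop :=
  eps iA *: BV Gam (e iA) (e iA) + eps iB *: BV Gam (e iB) (e iB)
    + eps iC *: BV Gam (e iC) (e iC) = 0.
Definition totally_geodesic_fol (Gam : 'I_5 -> 'I_5 -> vec) : Prop :=
  forall u v, vertical u -> vertical v -> BV Gam u v = 0.

End Setting.
Arguments e {R} i.

(* By Koszul's formula, eps_k (Gam_ij^k + Gam_ji^k) = - eps_j c_ik^j - eps_i c_jk^i, so both
   second fundamental forms of F are read off the structure constants. The given brackets say
   that ad X and ad Y preserve su(2) and act on it by skew-symmetric matrices in the basis
   A, B, C. The first property kills B^H, so F is semi-Riemannian whether or not it is assumed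
   conformal. Skew-symmetry kills B^V(a, a) for a = A, B, C, so F is minimal, and turns
   2 eps_k B^V(a, b)^k into (eps_a - eps_b) [a, k]^b, which gives the criterion
   for total geodesy. *)

From HB Require Import structures.
From mathcomp Require Import all_boot all_order all_algebra.
From mathcomp Require Import ring lra.
Import Order.TTheory GRing.Theory Num.Theory.
Local Open Scope ring_scope.

Lemma iAE : iA = Ordinal (isT : (0 < 5)%N). Proof. exact/val_inj/inordK. Qed.
Lemma iBE : iB = Ordinal (isT : (1 < 5)%N). Proof. exact/val_inj/inordK. Qed.
Lemma iCE : iC = Ordinal (isT : (2 < 5)%N). Proof. exact/val_inj/inordK. Qed.
Lemma iXE : iX = Ordinal (isT : (3 < 5)%N). Proof. exact/val_inj/inordK. Qed.
Lemma iYE : iY = Ordinal (isT : (4 < 5)%N). Proof. exact/val_inj/inordK. Qed.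

Lemma vertical_indexP (a : 'I_5) : (a < 3)%N -> [\/ a = iA, a = iB | a = iC].
Proof.
move=> ha; rewrite -(inord_val a); case: (nat_of_ord a) ha => [|[|[|n]]] // _;
  by [apply: Or31 | apply: Or32 | apply: Or33].
Qed.

Lemma horizontal_indexP (k : 'I_5) : ~~ (k < 3)%N -> k = iX \/ k = iY.
Proof.
move=> hk; rewrite -(inord_val k); case: (nat_of_ord k) (ltn_ord k) hk => [|[|[|[|[|n]]]]] // _ _;
  by [left | right].
Qed.

Section Coordinates.
Context {R : realFieldType}.
Implicit Types (u v : vec R) (Gam : 'I_5 -> 'I_5 -> vec R).

Lemma e_mxE (i j : 'I_5) : (e i : vec R) 0 j = (j == i)%:R.
Proof. by rewrite /e mxE eqxx. Qed.

Lemma gm_er eps u j : gm eps u (e j) = eps j * u 0 j.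
Proof.
rewrite /gm (bigD1 j) //= big1 => [|i /negbTE ji]; last by rewrite e_mxE ji mulr0.
by rewrite e_mxE eqxx mulr1 addr0 mulrC.
Qed.

Lemma gm_el eps u j : gm eps (e j) u = eps j * u 0 j.
Proof.
rewrite /gm (bigD1 j) //= big1 => [|i /negbTE ji]; last by rewrite e_mxE ji mulr0 mul0r.
by rewrite e_mxE eqxx mulr1 addr0.
Qed.

Lemma bilin_e Gam i j : bilin Gam (e i) (e j) = Gam i j.
Proof.
rewrite /bilin (bigD1 i) //= (bigD1 j) //= big1 => [|j' /negbTE j'j]; last first.
  by rewrite !e_mxE j'j mulr0 scale0r.
rewrite big1 => [|i' /negbTE i'i]; last first.
  by rewrite big1 // => j' _; rewrite !e_mxE i'i mul0r scale0r.
by rewrite !e_mxE !eqxx mulr1 scale1r !addr0.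
Qed.

Lemma bilin_symE Gam u v k :
  (bilin Gam u v + bilin Gam v u) 0 k =
  \sum_i \sum_j u 0 i * v 0 j * (Gam i j 0 k + Gam j i 0 k).
Proof.
have bilinE w w' : bilin Gam w w' 0 k = \sum_i \sum_j w 0 i * w' 0 j * Gam i j 0 k.
  by rewrite summxE; apply: eq_bigr => i _; rewrite summxE; apply: eq_bigr => j _; rewrite mxE.
rewrite mxE !bilinE [X in _ + X]exchange_big -big_split /=.
by apply: eq_bigr => i _; rewrite -big_split /=; apply: eq_bigr => j _; ring.
Qed.

Lemma bilin_sym_eq0 (P : pred 'I_5) Gam u v k :
  (forall i, ~~ P i -> u 0 i = 0) -> (forall j, ~~ P j -> v 0 j = 0) ->
  (forall i j, P i -> P j -> Gam i j 0 k + Gam j i 0 k = 0) ->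
  (bilin Gam u v + bilin Gam v u) 0 k = 0.
Proof.
move=> u0 v0 Gam0; rewrite bilin_symE big1 // => i _; rewrite big1 // => j _.
have [Pi | /u0 ->] := boolP (P i); last by rewrite !mul0r.
have [Pj | /v0 ->] := boolP (P j); last by rewrite mulr0 mul0r.
by rewrite Gam0 ?mulr0.
Qed.

Lemma BH_mxE Gam u v k :
  BH Gam u v 0 k = if (k < 3)%N then 2^-1 * (bilin Gam u v + bilin Gam v u) 0 k else 0.
Proof. by rewrite /BH !mxE; case: ifP; rewrite ?mulr0. Qed.

Lemma BV_mxE Gam u v k :
  BV Gam u v 0 k = if (k < 3)%N then 0 else 2^-1 * (bilin Gam u v + bilin Gam v u) 0 k.
Proof. by rewrite /BV !mxE; case: ifP; rewrite ?mulr0. Qed.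

Lemma BV_e_mxE Gam a b k :
  BV Gam (e a) (e b) 0 k = if (k < 3)%N then 0 else 2^-1 * (Gam a b 0 k + Gam b a 0 k).
Proof. by rewrite BV_mxE !bilin_e mxE. Qed.

Lemma vertical_coord0 u (i : 'I_5) : vertical u -> ~~ (i < 3)%N -> u 0 i = 0.
Proof. by move=> <- hi; rewrite mxE (negbTE hi). Qed.

Lemma horizontal_coord0 u (i : 'I_5) : horizontal u -> (i < 3)%N -> u 0 i = 0.
Proof. by move=> <- hi; rewrite mxE hi. Qed.

Lemma vertical_e (a : 'I_5) : (a < 3)%N -> vertical (e a : vec R).
Proof.
move=> ha; apply/rowP => j; rewrite mxE; case: ifP => // hj.
by rewrite e_mxE; case: eqP hj => // ->; rewrite ha.
Qed.

End Coordinates.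

Section BracketCriteria.
Context {R : realFieldType} {eps : 'I_5 -> R} {c Gam : 'I_5 -> 'I_5 -> vec R}.
Hypothesis eps_neq0 : forall k, eps k != 0.
Hypothesis c_anti : forall i j, c i j = - c j i.
Hypothesis LC : is_levi_civita eps c Gam.

Lemma koszul_sym i j k :
  eps k * (Gam i j 0 k + Gam j i 0 k) = - eps j * c i k 0 j - eps i * c j k 0 i.
Proof.
have [torsion metric] := LC.
have T a b d : Gam a b 0 d - Gam b a 0 d = c a b 0 d by rewrite -torsion !mxE.
have M d a b : eps b * Gam d a 0 b + eps a * Gam d b 0 a = 0.
  by have := metric d a b; rewrite gm_er gm_el.
move: (M i j k) (M j i k) (M k i j).
move: (congr1 ( *%R (eps j)) (T i k j)) (congr1 ( *%R (eps i)) (T j k i)) => /=.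
lra.
Qed.

Hypothesis bracket_VH_vertical : forall a k j : 'I_5,
  (a < 3)%N -> ~~ (k < 3)%N -> ~~ (j < 3)%N -> c a k 0 j = 0.

Lemma sym_connection_HH (i j k : 'I_5) : ~~ (i < 3)%N -> ~~ (j < 3)%N -> (k < 3)%N ->
  Gam i j 0 k + Gam j i 0 k = 0.
Proof.
move=> hi hj hk; apply: (mulfI (eps_neq0 k)).
by rewrite koszul_sym mulr0 (c_anti i) (c_anti j) !mxE !bracket_VH_vertical //; lra.
Qed.

Lemma semi_riemannian_of_brackets : semi_riemannian_fol Gam.
Proof.
move=> u v hu hv; apply/rowP => k; rewrite BH_mxE [RHS]mxE; case: ifP => // hk.
rewrite (@bilin_sym_eq0 _ (fun i => ~~ (i < 3)%N)) ?mulr0 // => [i|j|i j hi hj].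
- by rewrite negbK; apply: horizontal_coord0.
- by rewrite negbK; apply: horizontal_coord0.
- exact: sym_connection_HH.
Qed.

Hypothesis bracket_VH_skew : forall a b k : 'I_5,
  (a < 3)%N -> (b < 3)%N -> ~~ (k < 3)%N -> c a k 0 b = - c b k 0 a.

Lemma sym_connection_VV (a b k : 'I_5) : (a < 3)%N -> (b < 3)%N -> ~~ (k < 3)%N ->
  eps k * (Gam a b 0 k + Gam b a 0 k) = (eps a - eps b) * c a k 0 b.
Proof. by move=> ha hb hk; rewrite koszul_sym (bracket_VH_skew _ _ _ hb ha hk); ring. Qed.

Lemma BV_e_diag (a : 'I_5) : (a < 3)%N -> BV Gam (e a) (e a) = 0.
Proof.
move=> ha; apply/rowP => k; rewrite BV_e_mxE [RHS]mxE; case: ifP => // /negbT hk.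
suff -> : Gam a a 0 k + Gam a a 0 k = 0 by rewrite mulr0.
by apply: (mulfI (eps_neq0 k)); rewrite sym_connection_VV // subrr !mul0r mulr0.
Qed.

Lemma minimal_of_brackets : minimal_fol eps Gam.
Proof. by rewrite /minimal_fol !BV_e_diag ?(iAE, iBE, iCE) // !scaler0 !addr0. Qed.

Lemma totally_geodesicP : totally_geodesic_fol Gam <->
  (forall a b k : 'I_5, (a < 3)%N -> (b < 3)%N -> ~~ (k < 3)%N -> (eps a - eps b) * c a k 0 b = 0).
Proof.
split=> [tg a b k ha hb hk | tg u v hu hv].
  have := congr1 (fun w : vec R => w 0 k) (tg _ _ (vertical_e _ ha) (vertical_e _ hb)).
  rewrite /= BV_e_mxE (negbTE hk) mxE => /eqP.
  rewrite mulf_eq0 invr_eq0 pnatr_eq0 /= => /eqP S0.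
  by rewrite -sym_connection_VV // S0 mulr0.
apply/rowP => k; rewrite BV_mxE [RHS]mxE; case: ifP => // /negbT hk.
rewrite (@bilin_sym_eq0 _ (fun i => (i < 3)%N)) ?mulr0 // => [i|j|i j hi hj].
- exact: vertical_coord0.
- exact: vertical_coord0.
by apply: (mulfI (eps_neq0 k)); rewrite sym_connection_VV // tg // mulr0.
Qed.

End BracketCriteria.

Section SU2Brackets.
Context {R : realFieldType} {eps : 'I_5 -> R} {c : 'I_5 -> 'I_5 -> vec R}.
Context {b11 b21 c11 c12 c21 c22 : R}.
Hypotheses (hAX : c iA iX = - (b11 *: e iB) - c11 *: e iC)
           (hAY : c iA iY = - (b21 *: e iB) - c21 *: e iC)
           (hBX : c iB iX = b11 *: e iA - c12 *: e iC)
           (hBY : c iB iY = b21 *: e iA - c22 *: e iC)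
           (hCX : c iC iX = c11 *: e iA + c12 *: e iB)
           (hCY : c iC iY = c21 *: e iA + c22 *: e iB).

Let su2_bracketE := (hAX, hAY, hBX, hBY, hCX, hCY).
Let basis_mxE := (mxE, @e_mxE R, iAE, iBE, iCE, iXE, iYE).

Lemma su2_bracket_VH_vertical (a k j : 'I_5) :
  (a < 3)%N -> ~~ (k < 3)%N -> ~~ (j < 3)%N -> c a k 0 j = 0.
Proof.
by move=> /vertical_indexP[]-> /horizontal_indexP[]-> /horizontal_indexP[]->;
  rewrite !su2_bracketE !basis_mxE /=; lra.
Qed.

Lemma su2_bracket_VH_skew (a b k : 'I_5) :
  (a < 3)%N -> (b < 3)%N -> ~~ (k < 3)%N -> c a k 0 b = - c b k 0 a.
Proof.
by move=> /vertical_indexP[]-> /vertical_indexP[]-> /horizontal_indexP[]->;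
  rewrite !su2_bracketE !basis_mxE /=; lra.
Qed.

Lemma su2_totally_geodesic_condition :
  (forall a b k : 'I_5, (a < 3)%N -> (b < 3)%N -> ~~ (k < 3)%N ->
     (eps a - eps b) * c a k 0 b = 0) <->
  ((eps iB - eps iA) * b11 = 0 /\ (eps iB - eps iA) * b21 = 0 /\
   (eps iC - eps iA) * c11 = 0 /\ (eps iC - eps iA) * c21 = 0 /\
   (eps iC - eps iB) * c12 = 0 /\ (eps iC - eps iB) * c22 = 0).
Proof.
split=> [tg | [h1 [h2 [h3 [h4 [h5 h6]]]]] a b k].
  move: (tg iB iA iX) (tg iB iA iY) (tg iC iA iX) (tg iC iA iY) (tg iC iB iX) (tg iC iB iY).
  rewrite !su2_bracketE !basis_mxE /= => /(_ isT isT isT) h1 /(_ isT isT isT) h2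
    /(_ isT isT isT) h3 /(_ isT isT isT) h4 /(_ isT isT isT) h5 /(_ isT isT isT) h6.
  by repeat split; lra.
move=> /vertical_indexP[]-> /vertical_indexP[]-> /horizontal_indexP[]->;
  move: h1 h2 h3 h4 h5 h6; rewrite !su2_bracketE !basis_mxE /=; lra.
Qed.

End SU2Brackets.

Theorem theorem4p2 (R : realFieldType) (eps : 'I_5 -> R)
  (c Gam : 'I_5 -> 'I_5 -> vec R)
  (b11 b21 c11 c12 c21 c22 : R) :
  (forall i, eps i = 1 \/ eps i = -1) ->
  is_lie_algebra c ->
  is_levi_civita eps c Gam ->
  c iA iB = 2 *: e iC -> c iC iA = 2 *: e iB -> c iB iC = 2 *: e iA ->
  c iA iX = - (b11 *: e iB) - c11 *: e iC ->
  c iA iY = - (b21 *: e iB) - c21 *: e iC ->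
  c iB iX = b11 *: e iA - c12 *: e iC ->
  c iB iY = b21 *: e iA - c22 *: e iC ->
  c iC iX = c11 *: e iA + c12 *: e iB ->
  c iC iY = c21 *: e iA + c22 *: e iB ->
  conformal_fol eps Gam ->
  semi_riemannian_fol Gam /\ minimal_fol eps Gam /\
  (totally_geodesic_fol Gam <->
     ((eps iB - eps iA) * b11 = 0 /\ (eps iB - eps iA) * b21 = 0 /\
      (eps iC - eps iA) * c11 = 0 /\ (eps iC - eps iA) * c21 = 0 /\
      (eps iC - eps iB) * c12 = 0 /\ (eps iC - eps iB) * c22 = 0)).
Proof.
move=> eps_unit [c_anti _] LC _ _ _ hAX hAY hBX hBY hCX hCY _.
have eps_neq0 k : eps k != 0 by case: (eps_unit k) => ->; rewrite ?oppr_eq0 oner_eq0.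
have VH_vertical := su2_bracket_VH_vertical hAX hAY hBX hBY hCX hCY.
have VH_skew := su2_bracket_VH_skew hAX hAY hBX hBY hCX hCY.
split; first exact: semi_riemannian_of_brackets eps_neq0 c_anti LC VH_vertical.
split; first exact: minimal_of_brackets eps_neq0 LC VH_skew.
rewrite (totally_geodesicP eps_neq0 LC VH_skew).
exact: su2_totally_geodesic_condition hAX hAY hBX hBY hCX hCY.
Qed.
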